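(* Let $n\geq 2$ and let $X$ be any finite subset of $\mathbb{R}^n$. Then there is a polynomial function $P:\mathbb{R}^n\rightarrow \mathbb{R}$ which has a local minimum at every point of $X$ and has no critical points other than the points of $X$. *)

From mathcomp Require Import all_boot all_algebra.
From mathcomp Require Import reals.
From mathcomp Require Import mpoly.
Set Implicit Arguments. Unset Strict Implicit. Unset Printing Implicit Defensive.
Import GRing.Theory Num.Theory.
Local Open Scope ring_scope.

(* Points of R^n are row vectors 'rV[R]_n; polynomial functions R^n -> R are
   (evaluations of) multivariate polynomials {mpoly R[n]}. *)

Definition peval (R : realType) (n : nat) (P : {mpoly R[n]}) (x : 'rV[R]_n) : R :=
  P.@[fun i => x ord0 i].

Definition sqdist (R : realType) (n : nat) (x y : 'rV[R]_n) : R :=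
  \sum_(i < n) (y ord0 i - x ord0 i) ^+ 2.

Definition is_local_min (R : realType) (n : nat) (P : {mpoly R[n]}) (x : 'rV[R]_n) : Prop :=
  exists2 e : R, 0 < e & forall y : 'rV[R]_n, sqdist x y < e -> peval P x <= peval P y.

(* x is a critical point of P: all partial derivatives of P vanish at x
   (for polynomials the partial derivatives are the formal ones, mderiv) *)
Definition is_critical (R : realType) (n : nat) (P : {mpoly R[n]}) (x : 'rV[R]_n) : Prop :=
  forall i : 'I_n, peval (mderiv i P) x = 0.

From mathcomp Require Import all_boot all_algebra.
From mathcomp Require Import reals.
From mathcomp Require Import mpoly.
From mathcomp Require Import polyrcf.
From mathcomp Require Import ring.
Import mathcomp.order.order.Order.TTheory GRing.Theory Num.Theory.
Local Open Scope ring_scope.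
Set Implicit Arguments. Unset Strict Implicit.

(* Coordinates are x_0, ..., x_{n-1}.  Choose c such that the linear form
   λ(x) = Σ c^i x_i separates the points of X (λ(a) - λ(b) is a nonzero
   polynomial in c), and let q be the polynomial with simple roots exactly
   the values λ(a), a ∈ X.  Take
     P = q(λ)^2 + Σ_{i ≥ 1} B_i^2,   B_i = s_i(λ) x_i - r_i(λ),
   where s_i = 1 except s_1 = q'^2, and r_i interpolates r_i(λ(a)) = s_i(λ(a)) a_i.
   P is a sum of squares vanishing on X, so each point of X is a minimum.
   At a critical point, ∂_i P for i ≥ 2 kills the i-th square and ∂_0 P
   reduces to 2 q q'(λ) + 2 B_1 (s_1'(λ) x_1 - r_1'(λ)) = 0.  Where q'(λ) = 0
   this is 2 r_1 r_1'(λ), made nonzero by adding a suitable multiple of q to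
   r_1; elsewhere s_1(λ) ≠ 0 forces B_1 = 0 and then q(λ) = 0, so λ(x) = λ(a)
   and x_i = a_i (i ≥ 1) for some a ∈ X, whence x = a. *)

Section Calculus.
Variables (R : realType) (n : nat).
Implicit Types (P Q : {mpoly R[n]}) (x : 'rV[R]_n).

Lemma pevalD x P Q : peval (P + Q) x = peval P x + peval Q x.
Proof. exact: mevalD. Qed.

Lemma pevalB x P Q : peval (P - Q) x = peval P x - peval Q x.
Proof. exact: mevalB. Qed.

Lemma pevalM x P Q : peval (P * Q) x = peval P x * peval Q x.
Proof. exact: mevalM. Qed.

Lemma pevalZ x c P : peval (c *: P) x = c * peval P x.
Proof. exact: mevalZ. Qed.

Lemma pevalC x c : peval c%:MP x = c.
Proof. exact: mevalC. Qed.

Lemma pevalXi x i : peval 'X_i x = x ord0 i.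
Proof. exact: mevalXU. Qed.

Lemma peval_sqr x P : peval (P ^+ 2) x = peval P x ^+ 2.
Proof. by rewrite !expr2 pevalM. Qed.

Lemma peval_sum x (I : Type) (r : seq I) (p : pred I) (F : I -> {mpoly R[n]}) :
  peval (\sum_(i <- r | p i) F i) x = \sum_(i <- r | p i) peval (F i) x.
Proof. exact: raddf_sum. Qed.

Definition partial (i : 'I_n) P x := peval (mderiv i P) x.

Lemma partialD x i P Q : partial i (P + Q) x = partial i P x + partial i Q x.
Proof. by rewrite /partial mderivD pevalD. Qed.

Lemma partialB x i P Q : partial i (P - Q) x = partial i P x - partial i Q x.
Proof. by rewrite /partial mderivB pevalB. Qed.

Lemma partialM x i P Q :
  partial i (P * Q) x = partial i P x * peval Q x + peval P x * partial i Q x.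
Proof. by rewrite /partial mderivM pevalD !pevalM. Qed.

Lemma partial_sqr x i P : partial i (P ^+ 2) x = 2 * peval P x * partial i P x.
Proof. rewrite expr2 partialM; ring. Qed.

Lemma partialC x i c : partial i c%:MP x = 0.
Proof. by rewrite /partial mderivC pevalC. Qed.

Lemma partialZ x i c P : partial i (c *: P) x = c * partial i P x.
Proof. by rewrite /partial mderivZ pevalZ. Qed.

Lemma partialXi x i j : partial i 'X_j x = (j == i)%:R.
Proof.
rewrite /partial mderivX mnm1E; case: eqP => [->|_]; last by rewrite scale0r pevalC.
have -> : (U_(i) - U_(i))%MM = 0%MM by apply/mnmP => k; rewrite mnmBE mnm0E subnn.
by rewrite scale1r mpolyX0 pevalC.
Qed.

Lemma partial_sum x i (I : Type) (r : seq I) (p : pred I) (F : I -> {mpoly R[n]}) :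
  partial i (\sum_(k <- r | p k) F k) x = \sum_(k <- r | p k) partial i (F k) x.
Proof. by rewrite /partial raddf_sum peval_sum. Qed.

Variable c : R.

Definition lform x : R := \sum_(i < n) c ^+ i * x ord0 i.
Definition mlform : {mpoly R[n]} := \sum_(i < n) c ^+ i *: 'X_i.
Definition comp_lform (p : {poly R}) : {mpoly R[n]} := (map_poly (@mpolyC n R) p).[mlform].

Lemma peval_mlform x : peval mlform x = lform x.
Proof. by rewrite peval_sum; apply: eq_bigr => i _; rewrite pevalZ pevalXi. Qed.

Lemma partial_mlform x i : partial i mlform x = c ^+ i.
Proof.
rewrite partial_sum (bigD1 i) //= partialZ partialXi eqxx mulr1 big1 ?addr0 //.
by move=> j /negPf ji; rewrite partialZ partialXi ji mulr0.
Qed.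

Lemma peval_comp_lform x p : peval (comp_lform p) x = p.[lform x].
Proof.
rewrite /comp_lform; elim/poly_ind: p => [|p a IH].
  by rewrite map_poly0 !horner0 -(pevalC x 0) mpolyC0.
rewrite rmorphD rmorphM /= map_polyX map_polyC /= !hornerMXaddC pevalD pevalM.
by rewrite IH peval_mlform pevalC.
Qed.

Lemma partial_comp_lform x i p : partial i (comp_lform p) x = p^`().[lform x] * c ^+ i.
Proof.
rewrite /comp_lform; elim/poly_ind: p => [|p a IH].
  by rewrite map_poly0 !horner0 deriv0 horner0 mul0r -(partialC x i 0) mpolyC0.
rewrite rmorphD rmorphM /= map_polyX map_polyC /= !hornerMXaddC partialD partialM.
rewrite partialC IH partial_mlform derivMXaddC hornerD hornerMX -/(comp_lform p).
rewrite peval_comp_lform peval_mlform; ring.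
Qed.

End Calculus.

Section SumOfSquares.
Variables (R : realType) (n : nat) (c : R) (q : {poly R}) (s r : 'I_n -> {poly R}).
Implicit Types (x : 'rV[R]_n).
Local Notation comp_lform := (@comp_lform R n c).
Local Notation lform := (@lform R n c).

Definition bterm i : {mpoly R[n]} := comp_lform (s i) * 'X_i - comp_lform (r i).

Definition sos : {mpoly R[n]} :=
  comp_lform q ^+ 2 + \sum_(i < n | (0 < i)%N) bterm i ^+ 2.

Definition bval x i := (s i).[lform x] * x ord0 i - (r i).[lform x].

(* the part of the gradient of [sos] proportional to the gradient of [lform] *)
Definition grad_lform x := 2 * q.[lform x] * q^`().[lform x] +
  \sum_(i < n | (0 < i)%N)
     2 * bval x i * ((s i)^`().[lform x] * x ord0 i - (r i)^`().[lform x]).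

Lemma peval_bterm x i : peval (bterm i) x = bval x i.
Proof. by rewrite pevalB pevalM !peval_comp_lform pevalXi. Qed.

Lemma peval_sos x :
  peval sos x = q.[lform x] ^+ 2 + \sum_(i < n | (0 < i)%N) bval x i ^+ 2.
Proof.
rewrite pevalD peval_sqr peval_comp_lform peval_sum; congr (_ + _).
by apply: eq_bigr => i _; rewrite peval_sqr peval_bterm.
Qed.

Lemma partial_bterm x i j : partial j (bterm i) x =
  ((s i)^`().[lform x] * x ord0 i - (r i)^`().[lform x]) * c ^+ j
  + (s i).[lform x] * (i == j)%:R.
Proof.
rewrite partialB partialM !partial_comp_lform partialXi peval_comp_lform pevalXi.
ring.
Qed.

Lemma partial_sos x j : partial j sos x = c ^+ j * grad_lform x +
  (if (0 < j)%N then 2 * bval x j * (s j).[lform x] else 0).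
Proof.
rewrite partialD partial_sqr partial_comp_lform peval_comp_lform partial_sum.
under eq_bigr => i _ do rewrite partial_sqr partial_bterm peval_bterm mulrDr.
rewrite big_split /= /grad_lform mulrDr mulr_sumr -addrA; congr (_ + (_ + _)).
- ring.
- by apply: eq_bigr => i _; ring.
case: ifP => j_gt0; last first.
  rewrite big1 // => i i_gt0.
  have /negPf -> : i != j by apply: contraFneq j_gt0 => <-.
  by rewrite mulr0n !mulr0.
rewrite (bigD1 j) //= eqxx mulr1 big1 ?addr0 // => i /andP[_ /negPf ->].
by rewrite mulr0n !mulr0.
Qed.

Lemma sos_ge0 x : 0 <= peval sos x.
Proof.
by rewrite peval_sos addr_ge0 ?sqr_ge0 // sumr_ge0 // => i _; rewrite sqr_ge0.
Qed.

End SumOfSquares.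

Section CriticalPoints.
Variables (R : realType) (n : nat) (c : R) (q : {poly R}) (s r : 'I_n -> {poly R}).
Variable i1 : 'I_n.
Hypothesis i1_gt0 : (0 < i1)%N.
Hypothesis s_eq1 : forall i, i != i1 -> s i = 1.
Hypothesis s_i1 : s i1 = q^`() ^+ 2.
Hypothesis r_i1_neq0 : forall z, root q^`() z -> (r i1).[z] * (r i1)^`().[z] != 0.
Implicit Types (x : 'rV[R]_n).
Local Notation lform := (@lform R n c).
Local Notation bval := (bval c s r).
Local Notation grad_lform := (grad_lform c q s r).

Lemma grad_lform_crit x : is_critical (sos c q s r) x -> grad_lform x = 0.
Proof.
move=> crit_x; pose i0 : 'I_n := Ordinal (leq_ltn_trans (leq0n i1) (ltn_ord i1)).
have : partial i0 (sos c q s r) x = 0 := crit_x i0.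
by rewrite partial_sos /= expr0 mul1r addr0.
Qed.

Lemma bval_crit x (j : 'I_n) : is_critical (sos c q s r) x -> (0 < j)%N ->
  bval x j * (s j).[lform x] = 0.
Proof.
move=> crit_x j_gt0; have : partial j (sos c q s r) x = 0 := crit_x j.
rewrite partial_sos grad_lform_crit // mulr0 add0r j_gt0 => /eqP.
by rewrite -mulrA mulf_eq0 pnatr_eq0 /= => /eqP.
Qed.

Lemma sos_crit x : is_critical (sos c q s r) x ->
  q.[lform x] = 0 /\ forall i : 'I_n, (0 < i)%N -> bval x i = 0.
Proof.
move=> crit_x; have grad0 := grad_lform_crit crit_x.
have bval_crit_s := bval_crit crit_x; set u := lform x in grad0 bval_crit_s *.
have bval_other (j : 'I_n) : (0 < j)%N -> j != i1 -> bval x j = 0.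
  by move=> j_gt0 ji1; have := bval_crit_s j j_gt0; rewrite s_eq1 // hornerC mulr1.
have {grad0} grad0 : 2 * q.[u] * q^`().[u] +
    2 * bval x i1 * ((s i1)^`().[u] * x ord0 i1 - (r i1)^`().[u]) = 0.
  rewrite -grad0 /grad_lform (bigD1 i1) //= big1 ?addr0 // => j /andP[j_gt0 ji1].
  by rewrite bval_other // !mulr0 mul0r.
have dq_neq0 : q^`().[u] != 0.
  apply/negP => dq_u; have := r_i1_neq0 dq_u; apply/negP; rewrite negbK.
  have dq0 : q^`().[u] = 0 := eqP dq_u.
  have s_u : (s i1).[u] = 0 by rewrite s_i1 horner_exp dq0 expr0n.
  have ds_u : (s i1)^`().[u] = 0.
    by rewrite s_i1 expr2 derivM hornerD !hornerM dq0 !mul0r mulr0 addr0.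
  move: grad0; rewrite /bval -/u dq0 s_u ds_u !(mul0r, mulr0, sub0r, add0r).
  by rewrite -mulrA mulrNN => /eqP; rewrite mulf_eq0 pnatr_eq0.
have bval_i1 : bval x i1 = 0.
  apply/eqP; have /eqP := bval_crit_s i1 i1_gt0.
  by rewrite mulf_eq0 s_i1 horner_exp expf_eq0 (negPf dq_neq0) andbF orbF.
split; last by move=> i i_gt0; have [->|] := eqVneq i i1; last exact: bval_other.
move/eqP: grad0; rewrite bval_i1 mulr0 mul0r addr0 -mulrA mulf_eq0 pnatr_eq0 /=.
by rewrite mulf_eq0 (negPf dq_neq0) orbF => /eqP.
Qed.

End CriticalPoints.

Lemma exists_notin (R : realDomainType) (l : seq R) : exists x, x \notin l.
Proof.
suff [x ub_x] : exists x, forall y, y \in l -> y < x.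
  by exists x; apply/negP => /ub_x; rewrite ltxx.
elim: l => [|a l [x ub_x]]; first by exists 0.
exists (Num.max x (a + 1)) => y; rewrite inE => /orP[/eqP ->|/ub_x y_lt].
  by rewrite lt_max ltrDl ltr01 orbT.
by rewrite lt_max y_lt.
Qed.

Lemma affine_neq0 (R : fieldType) (a b y : R) : b != 0 -> y != - a / b -> a + b * y != 0.
Proof.
move=> b_neq0; apply: contra; rewrite addr_eq0 => /eqP ->.
by rewrite opprK mulrC mulKf.
Qed.

Lemma exists_interpolant (R : fieldType) (T : eqType) (X : seq T) (g h : T -> R) :
  {in X &, injective g} -> exists L : {poly R}, forall a, a \in X -> L.[g a] = h a.
Proof.
elim: X => [|a X IH] g_inj; first by exists 0.
have [L L_interp] : exists L : {poly R}, forall b, b \in X -> L.[g b] = h b.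
  by apply: IH => x y x_in y_in; apply: g_inj; rewrite inE ?x_in ?y_in orbT.
have [aX|aX] := boolP (a \in X).
  by exists L => b; rewrite inE => /orP[/eqP ->|]; apply: L_interp.
pose W := \prod_(b <- X) ('X - (g b)%:P).
have W_ga : W.[g a] != 0.
  rewrite horner_prod prodf_seq_neq0; apply/allP => b bX /=.
  rewrite hornerXsubC subr_eq0; apply: contra aX => /eqP gab.
  by rewrite (g_inj a b) ?inE ?eqxx ?bX ?orbT.
exists (L + ((h a - L.[g a]) / W.[g a]) *: W) => b; rewrite inE hornerD hornerZ.
case/orP => [/eqP ->|bX]; first by rewrite divfK // addrC subrK.
have -> : W.[g b] = 0 by rewrite horner_prod (big_rem b bX) /= hornerXsubC subrr mul0r.
by rewrite mulr0 addr0 L_interp.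
Qed.

Lemma deriv_prod_XsubC_neq0 (R : idomainType) (T : seq R) z : uniq T -> z \in T ->
  (\prod_(t <- T) ('X - t%:P))^`().[z] != 0.
Proof.
move=> T_uniq zT; rewrite (big_rem z zT) /= derivM derivXsubC mul1r hornerD hornerM.
rewrite hornerXsubC subrr mul0r addr0 horner_prod prodf_seq_neq0.
apply/allP => t t_in /=; rewrite hornerXsubC subr_eq0.
by apply: contraTneq t_in => ->; rewrite mem_rem_uniqF.
Qed.

Lemma exists_separable_poly (R : idomainType) (T : seq R) : exists q : {poly R},
  (forall z, root q z = (z \in T)) /\ (forall z, root q z -> ~~ root q^`() z).
Proof.
exists (\prod_(t <- undup T) ('X - t%:P)).
have root_q z : root (\prod_(t <- undup T) ('X - t%:P)) z = (z \in T).
  by rewrite root_prod_XsubC mem_undup.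
split=> // z; rewrite root_q -mem_undup; exact: deriv_prod_XsubC_neq0 (undup_uniq T).
Qed.

Section RealClosed.
Variable R : rcfType.

Lemma mem_rootsR (p : {poly R}) z : p != 0 -> root p z -> z \in rootsR p.
Proof. by move=> p_neq0 pz; rewrite -(roots_on_rootsR p_neq0) pz andbT. Qed.

Lemma exists_nonroot (p : {poly R}) : p != 0 -> exists x, ~~ root p x.
Proof.
move=> p_neq0; have [x x_notin] := exists_notin (rootsR p); exists x.
by apply: contra x_notin; apply: mem_rootsR.
Qed.

(* Adding [q * (b + d X)] does not change [L] on the roots of [q]; [d] is chosen
   so that the derivative, then [b] so that the value, avoids zero at the
   finitely many roots of [q']. *)
Lemma exists_perturbation (q L : {poly R}) : q^`() != 0 ->
    (forall z, root q^`() z -> q.[z] != 0) ->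
  exists r : {poly R}, (forall z, root q z -> r.[z] = L.[z]) /\
    (forall z, root q^`() z -> r.[z] * r^`().[z] != 0).
Proof.
move=> dq_neq0 q_neq0; pose zs := rootsR q^`().
have [d d_notin] := exists_notin [seq - L^`().[z] / q.[z] | z <- zs].
have [b b_notin] := exists_notin [seq - (L.[z] + q.[z] * (d * z)) / q.[z] | z <- zs].
exists (L + q * (b%:P + d *: 'X)); split => z qz.
  by rewrite hornerD hornerM (eqP qz) mul0r addr0.
have z_in : z \in zs by apply: mem_rootsR.
rewrite mulf_eq0 negb_or; apply/andP; split.
  have -> : (L + q * (b%:P + d *: 'X)).[z] = L.[z] + q.[z] * (d * z) + q.[z] * b.
    by rewrite hornerD hornerM hornerD hornerC hornerZ hornerX mulrDr addrA addrAC.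
  apply: affine_neq0; first exact: q_neq0.
  by apply: contra b_notin => /eqP ->; apply: map_f.
have -> : (L + q * (b%:P + d *: 'X))^`().[z] = L^`().[z] + q.[z] * d.
  rewrite derivD derivM derivD derivC derivZ derivX hornerD hornerD hornerM (eqP qz).
  by rewrite mul0r add0r add0r hornerM alg_polyC hornerC.
apply: affine_neq0; first exact: q_neq0.
by apply: contra d_notin => /eqP ->; apply: map_f.
Qed.

End RealClosed.

Lemma exists_lform_injective (R : realType) (n : nat) (X : seq 'rV[R]_n) :
  exists c : R, {in X &, injective (lform c)}.
Proof.
pose diff_poly (a b : 'rV[R]_n) : {poly R} := \sum_(i < n) (a ord0 i - b ord0 i) *: 'X^i.
have lformB c a b : lform c a - lform c b = (diff_poly a b).[c].
  rewrite horner_sum -sumrB; apply: eq_bigr => i _.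
  rewrite hornerZ hornerXn; ring.
have diff_poly_neq0 a b : a != b -> diff_poly a b != 0.
  apply: contraNneq => /polyP coef_eq; apply/eqP/rowP => i; apply/eqP; rewrite -subr_eq0.
  have := coef_eq i; rewrite coef_sum coef0 (bigD1 i) //= coefZ coefXn eqxx mulr1.
  rewrite big1 ?addr0 => [->//|j ji]; rewrite coefZ coefXn.
  by rewrite eq_sym val_eqE (negPf ji) mulr0n mulr0.
pose Q := \prod_(a <- X) \prod_(b <- X | a != b) diff_poly a b.
have Q_neq0 : Q != 0.
  rewrite prodf_seq_neq0; apply/allP => a _ /=; rewrite prodf_seq_neq0.
  by apply/allP => b _ /=; apply/implyP; apply: diff_poly_neq0.
have [c Qc] := exists_nonroot Q_neq0; exists c => a b aX bX lab.
apply: contraTeq Qc => ab; rewrite negbK /root horner_prod prodf_seq_eq0.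
apply/hasP; exists a => //; rewrite horner_prod prodf_seq_eq0.
by apply/hasP; exists b => //; rewrite ab -lformB lab subrr /=.
Qed.

Section Witness.
Variables (R : realType) (n : nat) (c : R) (X : seq 'rV[R]_n).
Variables (q : {poly R}) (s r : 'I_n -> {poly R}).
Hypothesis root_q : forall z, root q z = (z \in map (lform c) X).
Hypothesis r_interp :
  forall i a, a \in X -> (r i).[lform c a] = (s i).[lform c a] * a ord0 i.
Hypothesis s_neq0 : forall i a, a \in X -> (s i).[lform c a] != 0.

Lemma bval_lform_eq x a i : a \in X -> lform c x = lform c a ->
  bval c s r x i = (s i).[lform c a] * (x ord0 i - a ord0 i).
Proof. by move=> aX xa; rewrite /bval xa r_interp // mulrBr. Qed.

Lemma sos_local_min a : a \in X -> is_local_min (sos c q s r) a.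
Proof.
move=> aX; exists 1 => [|y _]; first exact: ltr01.
suff -> : peval (sos c q s r) a = 0 by apply: sos_ge0.
rewrite peval_sos big1 => [|i _]; last first.
  by rewrite (bval_lform_eq _ aX) // subrr mulr0 expr0n.
have /eqP -> : root q (lform c a) by rewrite root_q map_f.
by rewrite expr0n addr0.
Qed.

Lemma eq_of_lform_bval x a : a \in X -> lform c x = lform c a ->
  (forall i : 'I_n, (0 < i)%N -> bval c s r x i = 0) -> x = a.
Proof.
move=> aX xa bval0.
have coord_eq (i : 'I_n) : (0 < i)%N -> x ord0 i = a ord0 i.
  move=> i_gt0; apply/eqP; rewrite -subr_eq0.
  have := bval0 i i_gt0; rewrite (bval_lform_eq _ aX) // => /eqP.
  by rewrite mulf_eq0 (negPf (s_neq0 i aX)).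
apply/rowP => i; have [i0|] := posnP i; last exact: coord_eq.
have /eqP : lform c x - lform c a = 0 by rewrite xa subrr.
rewrite /lform -sumrB (bigD1 i) //= big1 ?addr0 => [|j ji].
  by rewrite i0 expr0 !mul1r subr_eq0 => /eqP.
rewrite coord_eq ?subrr // lt0n; apply: contraNneq ji => j0.
by rewrite -val_eqE /= i0 j0.
Qed.

Variable i1 : 'I_n.
Hypothesis i1_gt0 : (0 < i1)%N.
Hypothesis s_eq1 : forall i, i != i1 -> s i = 1.
Hypothesis s_i1 : s i1 = q^`() ^+ 2.
Hypothesis r_i1_neq0 : forall z, root q^`() z -> (r i1).[z] * (r i1)^`().[z] != 0.

Lemma sos_critical_mem x : is_critical (sos c q s r) x -> x \in X.
Proof.
move=> crit_x; have [qx bval0] := sos_crit i1_gt0 s_eq1 s_i1 r_i1_neq0 crit_x.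
have /mapP[a aX xa] : lform c x \in map (lform c) X by rewrite -root_q; apply/eqP.
by rewrite (eq_of_lform_bval aX xa bval0).
Qed.

End Witness.

Lemma exists_coordinate_interpolants (R : realType) (n : nat) (c : R)
    (X : seq 'rV[R]_n) (q : {poly R}) (s : 'I_n -> {poly R}) (i1 : 'I_n) :
    {in X &, injective (lform c)} -> q^`() != 0 ->
    (forall z, root q z = (z \in map (lform c) X)) ->
    (forall z, root q z -> ~~ root q^`() z) ->
  exists r : 'I_n -> {poly R},
    (forall i a, a \in X -> (r i).[lform c a] = (s i).[lform c a] * a ord0 i) /\
    (forall z, root q^`() z -> (r i1).[z] * (r i1)^`().[z] != 0).
Proof.
move=> lform_inj dq_neq0 root_q q_sep.
have [L L_interp] : exists L : 'I_n -> {poly R}, forall i a, a \in X ->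
    (L i).[lform c a] = (s i).[lform c a] * a ord0 i.
  apply: (@fin_all_exists _ (fun=> {poly R}) (fun i L => forall a, a \in X ->
    L.[lform c a] = (s i).[lform c a] * a ord0 i)) => i.
  exact: exists_interpolant.
have [r1 [r1_L r1_neq0]] := exists_perturbation (L i1) dq_neq0
  (fun z => contraL (q_sep z)).
exists (fun i => if i == i1 then r1 else L i); split; last by rewrite eqxx.
move=> i a aX; case: ifP => [/eqP ->|_]; last exact: L_interp.
by rewrite r1_L ?L_interp // root_q map_f.
Qed.

Theorem proposition1 (R : realType) (n : nat) (hn : (2 <= n)%N)
  (X : seq 'rV[R]_n) :
  exists P : {mpoly R[n]},
    (forall x, x \in X -> is_local_min P x) /\
    (forall x, is_critical P x -> x \in X).
Proof.
pose i1 : 'I_n := Ordinal hn.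
have [->|[a0 a0X]] : X = [::] \/ exists a, a \in X.
  by case: X => [|a X]; [left|right; exists a; rewrite mem_head].
  exists 'X_i1; split=> // x /(_ i1); rewrite -[peval _ x]/(partial _ _ x).
  by rewrite partialXi eqxx => /eqP; rewrite oner_eq0.
have [c lform_inj] := exists_lform_injective X.
have [q [root_q q_sep]] := exists_separable_poly (map (lform c) X).
have dq_neq0 : q^`() != 0.
  have : ~~ root q^`() (lform c a0) by rewrite q_sep // root_q map_f.
  by apply: contraNneq => ->; rewrite root0.
pose s i : {poly R} := if i == i1 then q^`() ^+ 2 else 1.
have s_neq0 i a : a \in X -> (s i).[lform c a] != 0.
  move=> aX; rewrite /s; case: ifP => _; last by rewrite hornerC oner_eq0.
  by rewrite horner_exp expf_neq0 // q_sep // root_q map_f.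
have [r [r_interp r_i1_neq0]] :=
  exists_coordinate_interpolants s i1 lform_inj dq_neq0 root_q q_sep.
exists (sos c q s r); split=> [a aX|x]; first exact: sos_local_min.
apply: (sos_critical_mem root_q r_interp s_neq0 (erefl : (0 < i1)%N) _ _ r_i1_neq0).
  by move=> i; rewrite /s => /negPf ->.
by rewrite /s eqxx.
Qed.
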